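(* Let $\lambda\in\mathbb R$ and let $\xi$ be a pseudo symmetric measure. Let $\ell=(1,\lambda,\lambda)'$, $\ell_2=(0,1,1)'$, $Q_{\xi,2}=\ell_2'V_\xi\ell_2$ and $q_{\xi,2}^*=\ell'V_\xi\ell-(\ell'V_\xi\ell_2)^2\,Q_{\xi,2}^+$ (where $a^+=1/a$ for $a\ne0$ and $0^+=0$). Then for every $\tau\in\mathcal T$ the eigenvalues of $\tilde C_\xi(\tau)$, counted with multiplicity, are $0$ (multiplicity $1$), $(t-1)^{-1}q_{\xi,2}^*$ (multiplicity $1$) and $(t-1)^{-1}\ell'V_\xi\ell$ (multiplicity $t-2$). Moreover $q_{\xi,2}^*\le\ell'V_\xi\ell$.
   Context: Fix integers $k\ge 2$ and $t\ge 2$. Let $\mathcal S$ be the set of all $t^k$ sequences $s=(t_1,\dots,t_k)$ with entries $t_j\in\{1,\dots,t\}$. For $s\in\mathcal S$ let $T_s$ be the $k\times t$ matrix with $(j,i)$ entry equal to $1$ if $t_j=i$ and $0$ otherwise; let $H$ be the $k\times k$ matrix with $(i,j)$ entry $1$ if $i\equiv j+1\pmod k$ and $0$ otherwise; put $L_s=HT_s$, $R_s=H'T_s$ (a prime denotes transpose). Let $\Sigma$ be a fixed $k\times k$ positive definite matrix, $1_k$ the all-ones vector, and $\tilde B=\Sigma^{-1}-\Sigma^{-1}1_k1_k'\Sigma^{-1}/(1_k'\Sigma^{-1}1_k)$. With $G_0=T_s,G_1=L_s,G_2=R_s$ define for $0\le i,j\le 2$ the $t\times t$ matrices $C_{sij}=G_i'\tilde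 BG_j$. A measure is a vector $\xi=(p_s)_{s\in\mathcal S}$ with $p_s\ge0$, $\sum_sp_s=1$. Put $C_{\xi ij}=\sum_sp_sC_{sij}$, $c_{\xi ij}=\operatorname{tr}(C_{\xi ij})$, $V_\xi=(c_{\xi ij})_{0\le i,j\le2}$. The measure $\xi$ is pseudo symmetric if each $C_{\xi ij}$ is completely symmetric, i.e. of the form $aI_t+bJ_t$ with $J_t$ the all-ones matrix. $M^+$ denotes the Moore–Penrose inverse. For $u,w\in\mathbb R^3$ (coordinates indexed $0,1,2$) let $C_\xi[u,w]=\sum_{i,j=0}^2u_iw_jC_{\xi ij}$. Let $\mathcal T=\{x\in\mathbb R^t:1_t'x=0,\ x\ne0\}$. For $u\in\mathbb R^3$, vectors $w_1,\dots,w_m\in\mathbb R^3$ ($m\in\{1,2\}$) and $x\in\mathcal T$ define $\mathcal I_\xi(u;w_1,\dots,w_m;x)=C_\xi[u,u]-F'G^+F$, where $F$ is the $m\times t$ matrix whose $a$-th row is $(C_\xi[u,w_a]x)'$ and $G$ is the $m\times m$ matrix with entries $x'C_\xi[w_a,w_b]x$. Undirectional model: the information matrix of $\xi$ for the direct treatment effect is $\tilde C_\xi(\tau)=\mathcal I_\xi(\ell;\ell_2;\tau)$, $\tau\in\mathcal T$, with $\ell=(1,\lambda,\lambda)'$, $\ell_2=(0,1,1)'$. *)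

From HB Require Import structures.
From mathcomp Require Import all_boot all_order all_algebra.
Set Implicit Arguments. Unset Strict Implicit. Unset Printing Implicit Defensive.
Import Order.TTheory GRing.Theory Num.Theory.
Local Open Scope ring_scope.

Section Defs.
Variables (R : realFieldType) (k t : nat).

(* sequences s = (t_1,...,t_k), entries in {1..t} encoded 0-based as 'I_t *)
Definition seqT := {ffun 'I_k -> 'I_t}.

Definition Tmat (s : seqT) : 'M[R]_(k, t) :=
  \matrix_(j < k, i < t) (if s j == i then 1 else 0).

Definition Hmat : 'M[R]_k :=
  \matrix_(i < k, j < k) (if (i %% k == j.+1 %% k)%N then 1 else 0).

Definition Lmat (s : seqT) : 'M[R]_(k, t) := Hmat *m Tmat s.
Definition Rmat (s : seqT) : 'M[R]_(k, t) := Hmat^T *m Tmat s.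

Definition Gmat (s : seqT) (i : 'I_3) : 'M[R]_(k, t) :=
  if (i : nat) == 0%N then Tmat s else if (i : nat) == 1%N then Lmat s else Rmat s.

Definition ones (n : nat) : 'cV[R]_n := const_mx 1.

Definition Btilde (Sigma : 'M[R]_k) : 'M[R]_k :=
  invmx Sigma - ((((ones k)^T *m invmx Sigma *m ones k) 0 0)^-1)
                  *: (invmx Sigma *m ones k *m (ones k)^T *m invmx Sigma).

Definition Cs (Sigma : 'M[R]_k) (s : seqT) (i j : 'I_3) : 'M[R]_t :=
  (Gmat s i)^T *m Btilde Sigma *m Gmat s j.

Definition is_measure (p : {ffun seqT -> R}) : Prop :=
  (forall s, 0 <= p s) /\ \sum_s p s = 1.

Definition Cxi (Sigma : 'M[R]_k) (p : {ffun seqT -> R}) (i j : 'I_3) : 'M[R]_t :=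
  \sum_s p s *: Cs Sigma s i j.

Definition Vxi (Sigma : 'M[R]_k) (p : {ffun seqT -> R}) : 'M[R]_3 :=
  \matrix_(i < 3, j < 3) \tr (Cxi Sigma p i j).

Definition completely_symmetric (A : 'M[R]_t) : Prop :=
  exists a b : R, A = a%:M + b *: const_mx 1.

Definition pseudo_symmetric (Sigma : 'M[R]_k) (p : {ffun seqT -> R}) : Prop :=
  forall i j : 'I_3, completely_symmetric (Cxi Sigma p i j).

Definition Cuw (Sigma : 'M[R]_k) (p : {ffun seqT -> R}) (u w : 'cV[R]_3) : 'M[R]_t :=
  \sum_(i < 3) \sum_(j < 3) (u i 0 * w j 0) *: Cxi Sigma p i j.

(* Moore-Penrose inverse of a scalar (1x1 matrix): a^+ = 1/a, 0^+ = 0 *)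
Definition pinv1 (a : R) : R := if a == 0 then 0 else a^-1.

(* I_xi(u; w; x) for m = 1 :  C[u,u] - F' G^+ F *)
Definition Ixi1 (Sigma : 'M[R]_k) (p : {ffun seqT -> R}) (u w : 'cV[R]_3)
    (x : 'cV[R]_t) : 'M[R]_t :=
  let F : 'rV[R]_t := (Cuw Sigma p u w *m x)^T in
  let G : R := (x^T *m Cuw Sigma p w w *m x) 0 0 in
  Cuw Sigma p u u - F^T *m ((pinv1 G) *: F).

Definition ellv (lambda : R) : 'cV[R]_3 := \col_(i < 3) (if (i : nat) == 0%N then 1 else lambda).
Definition ell2 : 'cV[R]_3 := \col_(i < 3) (if (i : nat) == 0%N then 0 else 1).

Definition Ctilde (Sigma : 'M[R]_k) (p : {ffun seqT -> R}) (lambda : R)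
    (tau : 'cV[R]_t) : 'M[R]_t :=
  Ixi1 Sigma p (ellv lambda) ell2 tau.

Definition qform (V : 'M[R]_3) (u w : 'cV[R]_3) : R := (u^T *m V *m w) 0 0.

Definition in_calT (x : 'cV[R]_t) : Prop := (ones t)^T *m x = 0 /\ x <> 0.

Definition pos_def (Sigma : 'M[R]_k) : Prop :=
  Sigma^T = Sigma /\ forall x : 'cV[R]_k, x != 0 -> 0 < (x^T *m Sigma *m x) 0 0.

End Defs.

From HB Require Import structures.
From mathcomp Require Import all_boot all_order all_algebra.
From mathcomp Require Import ring.
(* Every design matrix maps the all-ones vector to the all-ones vector and [Btilde Sigma]
   annihilates it, so each C_xi_ij has zero row sums; a completely symmetric matrix with
   zero row sums is a multiple of the centering matrix P = I - J/t, the multiple being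
   read off from the trace.  Hence C_xi[u,w] = (u'V w / (t-1)) P and, for tau orthogonal
   to the ones, the information matrix is c P - D tau tau', a rank-two perturbation of a
   scalar matrix whose characteristic polynomial Sylvester's determinant identity
   computes.  The inequality holds because V is positive semidefinite: [Btilde Sigma] is,
   by Cauchy-Schwarz for the inverse of Sigma, so Q_2 >= 0. *)

Set Implicit Arguments.
Unset Strict Implicit.
Unset Printing Implicit Defensive.

Import Order.TTheory GRing.Theory Num.Theory.
Local Open Scope ring_scope.

(* Both block factorizations of [[a, -U], [V, 1]] compute its determinant. *)
Lemma det_scalar_add_mulmxC (R : comNzRingType) n m (a : R)
    (U : 'M[R]_(n, m)) (V : 'M[R]_(m, n)) :
  a ^+ m * \det (a%:M + U *m V) = a ^+ n * \det (a%:M + V *m U).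
Proof.
pose X := block_mx (a%:M : 'M_n) (- U) V (1%:M : 'M_m).
have detXE : \det X = \det (a%:M + U *m V).
  have := congr1 determinant (mulmx_block 1%:M U 0 1%:M (a%:M : 'M_n) (- U) V 1%:M).
  rewrite det_mulmx det_ublock !det1 !mul1r => ->.
  by rewrite !mul1mx !mulmx1 !mul0mx !add0r addNr det_lblock det1 mulr1.
have := congr1 determinant
  (mulmx_block 1%:M 0 (- V) (a%:M : 'M_m) (a%:M : 'M_n) (- U) V 1%:M).
rewrite det_mulmx det_lblock det1 mul1r det_scalar -detXE => ->.
rewrite !mul1mx !mul0mx !addr0 mulmx1 mulNmx mul_scalar_mx mul_mx_scalar addNr.
by rewrite det_ublock det_scalar mulNmx mulmxN opprK addrC.
Qed.

Lemma char_poly_scalar_sub_mulmxC (R : comNzRingType) n m (c : R)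
    (U : 'M[R]_(n, m)) (V : 'M[R]_(m, n)) :
  ('X - c%:P) ^+ m * char_poly (c%:M - U *m V)
  = ('X - c%:P) ^+ n * char_poly (c%:M - V *m U).
Proof.
have char_poly_mxE p q (A : 'M[R]_(p, q)) (B : 'M[R]_(q, p)) :
    char_poly_mx (c%:M - A *m B) = ('X - c%:P)%:M + map_mx polyC A *m map_mx polyC B.
  rewrite /char_poly_mx map_mxB map_scalar_mx map_mxM /= opprB addrA.
  by rewrite addrAC (raddfB (@scalar_mx _ p)) addrAC.
by rewrite /char_poly !char_poly_mxE det_scalar_add_mulmxC.
Qed.

Lemma pinv1E (R : realFieldType) (a : R) : pinv1 a = a^-1.
Proof. by rewrite /pinv1; case: eqP => [->|]; rewrite ?invr0. Qed.

Lemma trmx_mul_self_gt0 (R : realFieldType) n (x : 'cV[R]_n) :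
  x != 0 -> 0 < (x^T *m x) 0 0.
Proof.
move=> x_neq0; have -> : (x^T *m x) 0 0 = \sum_i x i 0 ^+ 2.
  by rewrite mxE; apply: eq_bigr => i _; rewrite mxE expr2.
rewrite lt_def sumr_ge0 ?andbT => [|i _]; last exact: sqr_ge0.
apply: contraNneq x_neq0 => /eqP.
rewrite psumr_eq0 => [/allP x0|i _]; last exact: sqr_ge0.
apply/eqP/matrixP => i j; rewrite ord1 mxE; apply/eqP.
by have := x0 i (mem_index_enum i); rewrite sqrf_eq0.
Qed.

Section PositiveDefinite.
Variables (R : realFieldType) (k : nat).
Implicit Types (A : 'M[R]_k) (x y : 'cV[R]_k).

Definition bform A x y : R := (x^T *m A *m y) 0 0.

Lemma bform_sym A x y : A^T = A -> bform A x y = bform A y x.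
Proof.
move=> symA; rewrite /bform; transitivity ((x^T *m A *m y)^T 0 0).
  by rewrite [RHS]mxE.
by rewrite !trmx_mul trmxK symA mulmxA.
Qed.

Lemma bformBl A x1 x2 y : bform A (x1 - x2) y = bform A x1 y - bform A x2 y.
Proof.
by rewrite /bform linearB /= !mulmxBl [(_ - _ : 'M_1) 0 0]mxE [(- _ : 'M_1) 0 0]mxE.
Qed.

Lemma bformBr A x y1 y2 : bform A x (y1 - y2) = bform A x y1 - bform A x y2.
Proof. by rewrite /bform !mulmxBr [(_ - _ : 'M_1) 0 0]mxE [(- _ : 'M_1) 0 0]mxE. Qed.

Lemma bformZl A a x y : bform A (a *: x) y = a * bform A x y.
Proof. by rewrite /bform linearZ /= -!scalemxAl [(_ *: _ : 'M_1) 0 0]mxE. Qed.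

Lemma bformZr A a x y : bform A x (a *: y) = a * bform A x y.
Proof. by rewrite /bform -!scalemxAr [(_ *: _ : 'M_1) 0 0]mxE. Qed.

Lemma pos_def_bform_ge0 x A : pos_def A -> 0 <= bform A x x.
Proof.
case=> _ posA; have [->|/posA/ltW //] := eqVneq x 0.
by rewrite /bform mulmx0 mxE.
Qed.

Lemma pos_def_unitmx A : pos_def A -> A \in unitmx.
Proof.
case=> _ posA; rewrite unitmxE unitfE; apply/negP => /det0P [v v_neq0 vA0].
have := posA v^T; rewrite trmx_eq0 => /(_ v_neq0).
by rewrite trmxK vA0 mul0mx mxE ltxx.
Qed.

Lemma pos_def_invmx A : pos_def A -> pos_def (invmx A).
Proof.
move=> posdefA; have Aunit := pos_def_unitmx posdefA; case: posdefA => symA posA.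
split=> [|x x_neq0]; first by rewrite trmx_inv symA.
have y_neq0 : invmx A *m x != 0.
  by apply: contraNneq x_neq0 => /(congr1 (mulmx A)); rewrite mulKVmx // mulmx0 => ->.
have := posA _ y_neq0; rewrite trmx_mul trmx_inv symA -!mulmxA (mulmxA A).
by rewrite mulmxV // mul1mx mulmxA.
Qed.

Lemma bform_Cauchy_Schwarz x y A : pos_def A -> y != 0 ->
  bform A x y ^+ 2 / bform A y y <= bform A x x.
Proof.
move=> posdefA y_neq0; have yy_neq0 : bform A y y != 0.
  by case: posdefA => _ /(_ y y_neq0); rewrite lt0r => /andP[].
have := pos_def_bform_ge0 (x - (bform A x y / bform A y y) *: y) posdefA.
rewrite !(bformBl, bformBr, bformZl, bformZr) (bform_sym y x (proj1 posdefA)).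
by rewrite divfK // subrr mulr0 subr0 mulrAC -expr2 subr_ge0.
Qed.

Lemma ones_neq0 : (0 < k)%N -> ones R k != 0.
Proof.
move=> k_gt0; apply/eqP => /matrixP /(_ (Ordinal k_gt0) 0) /eqP.
by rewrite !mxE oner_eq0.
Qed.

Lemma Btilde_mul_ones (Sigma : 'M[R]_k) : (0 < k)%N -> pos_def Sigma ->
  Btilde Sigma *m ones R k = 0.
Proof.
move=> k_gt0 /pos_def_invmx posdefS'; rewrite /Btilde mulmxBl -scalemxAl -!mulmxA.
set d := (ones R k)^T *m (invmx Sigma *m ones R k).
have d_neq0 : d 0 0 != 0.
  by rewrite /d mulmxA gt_eqF //; case: posdefS' => _; apply; apply: ones_neq0.
by rewrite {2}[d]mx11_scalar mul_mx_scalar -scalemxAr scalerA mulVf // scale1r subrr.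
Qed.

(* x' Btilde x = x' S x - (x' S 1)^2 / (1' S 1) with S = invmx Sigma: Cauchy-Schwarz. *)
Lemma Btilde_bform_ge0 x (Sigma : 'M[R]_k) : (0 < k)%N -> pos_def Sigma ->
  0 <= bform (Btilde Sigma) x x.
Proof.
move=> k_gt0 /pos_def_invmx posdefS'.
have := bform_Cauchy_Schwarz x posdefS' (ones_neq0 k_gt0).
rewrite /bform /Btilde mulmxBr mulmxBl [(_ - _ : 'M_1) 0 0]mxE [(- _ : 'M_1) 0 0]mxE.
rewrite -scalemxAr -scalemxAl [(_ *: _ : 'M_1) 0 0]mxE.
have -> : x^T *m (invmx Sigma *m ones R k *m (ones R k)^T *m invmx Sigma) *m x
    = (x^T *m invmx Sigma *m ones R k) *m ((ones R k)^T *m invmx Sigma *m x).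
  by rewrite !mulmxA.
rewrite [(_ *m ((ones R k)^T *m _ *m _)) 0 0]mxE big_ord1.
rewrite -[(_ *m x) ord0 0]/(bform _ (ones R k) x) (bform_sym _ x (proj1 posdefS')).
by rewrite /bform subr_ge0 -expr2 mulrC.
Qed.

Lemma mxtrace_congr_ge0 n (B : 'M[R]_k) (M : 'M[R]_(k, n)) :
  (forall x, 0 <= bform B x x) -> 0 <= \tr (M^T *m B *m M).
Proof.
move=> B_psd; apply: sumr_ge0 => i _.
have -> : (M^T *m B *m M) i i = bform B (col i M) (col i M).
  by rewrite /bform tr_col -row_mul !mxE; apply: eq_bigr => l _; rewrite !mxE.
exact: B_psd.
Qed.

End PositiveDefinite.

Section Centering.
Variables (R : realFieldType) (t : nat).

Definition centering_mx : 'M[R]_t := 1%:M - t%:R^-1 *: const_mx 1.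

Lemma const_mx1E : const_mx 1 = ones R t *m (ones R t)^T.
Proof. by apply/matrixP => i j; rewrite !mxE big_ord1 !mxE mulr1. Qed.

Lemma trmx_ones_mul_ones : (ones R t)^T *m ones R t = t%:R%:M.
Proof.
apply/matrixP => i j; rewrite !ord1 !mxE.
under eq_bigr do rewrite !mxE mulr1.
by rewrite sumr_const card_ord.
Qed.

Lemma mxtrace_centering : (0 < t)%N -> \tr centering_mx = (t.-1)%:R.
Proof.
move=> t_gt0; rewrite mxtraceD mxtrace_scalar -scaleNr mxtraceZ /mxtrace.
under eq_bigr do rewrite mxE.
rewrite sumr_const card_ord mulNr mulVf ?pnatr_eq0 -?lt0n //.
by rewrite -[in LHS](prednK t_gt0) -natr1 addrK.
Qed.

Lemma centering_mx_mul_orth (x : 'cV[R]_t) : (ones R t)^T *m x = 0 ->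
  centering_mx *m x = x.
Proof.
move=> x_orth; rewrite mulmxBl mul1mx -scalemxAl const_mx1E -mulmxA x_orth.
by rewrite mulmx0 scaler0 subr0.
Qed.

Lemma trmx_centering : centering_mx^T = centering_mx.
Proof. by rewrite /centering_mx linearB /= linearZ /= trmx1 trmx_const. Qed.

Lemma completely_symmetric0 : completely_symmetric (0 : 'M[R]_t).
Proof. by exists 0, 0; rewrite scale0r addr0 raddf0. Qed.

Lemma completely_symmetricD (A B : 'M[R]_t) :
  completely_symmetric A -> completely_symmetric B -> completely_symmetric (A + B).
Proof.
move=> [a [b ->]] [a' [b' ->]]; exists (a + a'), (b + b').
by rewrite raddfD scalerDl addrACA.
Qed.

Lemma completely_symmetricZ c (A : 'M[R]_t) :
  completely_symmetric A -> completely_symmetric (c *: A).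
Proof.
by move=> [a [b ->]]; exists (c * a), (c * b); rewrite scalerDr scale_scalar_mx scalerA.
Qed.

Lemma completely_symmetric_centering (A : 'M[R]_t) : (1 < t)%N ->
  completely_symmetric A -> A *m ones R t = 0 ->
  A = ((t.-1)%:R^-1 * \tr A) *: centering_mx.
Proof.
move=> t_gt1 [a [b ->]] row_sum0.
have t_neq0 : t%:R != 0 :> R by rewrite pnatr_eq0 -lt0n ltnW.
have -> : a%:M + b *: const_mx 1 = a *: centering_mx.
  have -> : b = - (a / t%:R).
    move/matrixP: row_sum0 => /(_ (Ordinal (ltnW t_gt1)) 0).
    rewrite mulmxDl mul_scalar_mx -scalemxAl const_mx1E -mulmxA trmx_ones_mul_ones.
    rewrite mul_mx_scalar !mxE !mulr1 => /eqP; rewrite addrC addr_eq0 => /eqP bt.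
    by rewrite -mulNr -bt mulfK.
  by rewrite scalerBr scale_scalar_mx mulr1 scalerA scaleNr.
rewrite mxtraceZ mxtrace_centering ?(ltnW t_gt1) // mulrCA mulVf ?mulr1 //.
by rewrite pnatr_eq0 -lt0n -ltnS prednK // ltnW.
Qed.

Lemma char_poly_centering_sub_rank1 c d (x : 'cV[R]_t) : (1 < t)%N ->
  (ones R t)^T *m x = 0 ->
  char_poly (c *: centering_mx - d *: (x *m x^T))
  = 'X * ('X - (c - d * (x^T *m x) 0 0)%:P) * ('X - c%:P) ^+ (t - 2).
Proof.
move=> t_gt1 x_orth; set n := (x^T *m x) 0 0.
have t_neq0 : t%:R != 0 :> R by rewrite pnatr_eq0 -lt0n ltnW.
pose U : 'M[R]_(t, 1 + 1) := row_mx (ones R t) x.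
pose V : 'M[R]_(1 + 1, t) := col_mx ((c / t%:R) *: (ones R t)^T) (d *: x^T).
have UV : c *: centering_mx - d *: (x *m x^T) = c%:M - U *m V.
  rewrite mul_row_col /centering_mx scalerBr scale_scalar_mx mulr1 scalerA const_mx1E.
  by rewrite -!scalemxAr opprD addrA.
have x_orthT : x^T *m ones R t = 0 by rewrite -[ones R t]trmxK -trmx_mul x_orth trmx0.
have VU : c%:M - V *m U = block_mx 0 0 0 ((c - d * n)%:M).
  rewrite mul_col_row -!scalemxAl trmx_ones_mul_ones x_orth x_orthT !scaler0.
  rewrite scale_scalar_mx mulfVK // [x^T *m x]mx11_scalar scale_scalar_mx.
  by rewrite (scalar_mx_block 1 1) opp_block_mx add_block_mx subrr !subr0 raddfB.
have char_poly_VU : char_poly (c%:M - V *m U) = 'X * ('X - (c - d * n)%:P).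
  rewrite /char_poly /char_poly_mx VU map_block_mx !map_mx0 map_scalar_mx /=.
  rewrite (scalar_mx_block 1 1) opp_block_mx add_block_mx !oppr0 !addr0.
  by rewrite det_ublock -raddfB /= !det_scalar1.
have := char_poly_scalar_sub_mulmxC c U V; rewrite UV char_poly_VU.
have Xc2_neq0 : ('X - c%:P) ^+ 2 != 0 by rewrite expf_neq0 ?polyXsubC_eq0.
move=> charUV; apply: (mulfI Xc2_neq0); rewrite charUV -{1}(subnKC t_gt1) exprD.
by rewrite -mulrA [X in _ * X = _]mulrC.
Qed.

End Centering.

Section Design.
Variables (R : realFieldType) (k t : nat).
Variables (Sigma : 'M[R]_k) (p : {ffun seqT k t -> R}).
Hypotheses (k_gt0 : (0 < k)%N) (posdefS : pos_def Sigma).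

Lemma Tmat_mul_ones s : Tmat R s *m ones R t = ones R k.
Proof.
apply/matrixP => j z; rewrite !mxE (bigD1 (s j)) //= big1 ?addr0.
  by rewrite !mxE eqxx mulr1.
by move=> i /negPf si; rewrite !mxE eq_sym si mul0r.
Qed.

Lemma Hmat_mul_ones : Hmat R k *m ones R k = ones R k.
Proof.
apply/matrixP => i z; rewrite !mxE.
pose j0 : 'I_k := Ordinal (ltn_pmod (i + k.-1) k_gt0).
have i_succj0 : (i %% k == j0.+1 %% k)%N.
  by rewrite -[j0.+1]addn1 modnDml -addnA addn1 prednK // modnDr.
rewrite (bigD1 j0) //= big1 ?addr0; first by rewrite !mxE i_succj0 mulr1.
move=> j j_neq0; rewrite !mxE; case: ifP => [i_succj|]; last by rewrite mul0r.
case/eqP: j_neq0; apply: val_inj => /=; move: i_succj0.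
rewrite (eqP i_succj) -[j.+1]addn1 -[j0.+1]addn1 eqn_modDr => /eqP.
by rewrite (modn_small (ltn_ord j)) (modn_small (ltn_ord j0)).
Qed.

Lemma trHmat_mul_ones : (Hmat R k)^T *m ones R k = ones R k.
Proof.
apply/matrixP => i z; rewrite !mxE.
pose j0 : 'I_k := Ordinal (ltn_pmod i.+1 k_gt0).
rewrite (bigD1 j0) //= big1 ?addr0; first by rewrite !mxE modn_mod eqxx mulr1.
move=> j j_neq0; rewrite !mxE modn_small //; case: eqP => [ij|]; last by rewrite mul0r.
by case/eqP: j_neq0; apply: val_inj; rewrite /= ij.
Qed.

Lemma Gmat_mul_ones s i : Gmat R s i *m ones R t = ones R k.
Proof.
rewrite /Gmat /Lmat /Rmat; case: ifP => _; first exact: Tmat_mul_ones.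
by case: ifP => _; rewrite -mulmxA Tmat_mul_ones ?Hmat_mul_ones ?trHmat_mul_ones.
Qed.

Lemma Cxi_mul_ones i j : Cxi Sigma p i j *m ones R t = 0.
Proof.
rewrite mulmx_suml big1 // => s _.
by rewrite -scalemxAl /Cs -!mulmxA Gmat_mul_ones Btilde_mul_ones // mulmx0 scaler0.
Qed.

Lemma Cuw_mul_ones u w : Cuw Sigma p u w *m ones R t = 0.
Proof.
rewrite mulmx_suml big1 // => i _; rewrite mulmx_suml big1 // => j _.
by rewrite -scalemxAl Cxi_mul_ones scaler0.
Qed.

Lemma Cuw_completely_symmetric u w : pseudo_symmetric Sigma p ->
  completely_symmetric (Cuw Sigma p u w).
Proof.
move=> psym; apply: big_ind => [|A B|i _]; [exact: completely_symmetric0|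
  exact: completely_symmetricD|].
apply: big_ind => [|A B|j _]; [exact: completely_symmetric0|
  exact: completely_symmetricD|].
exact: completely_symmetricZ.
Qed.

Lemma mxtrace_Cuw u w : \tr (Cuw Sigma p u w) = qform (Vxi Sigma p) u w.
Proof.
rewrite /qform mxE raddf_sum /=; under eq_bigr do rewrite raddf_sum.
under eq_bigr do under eq_bigr do rewrite /= mxtraceZ.
rewrite exchange_big /=; apply: eq_bigr => j _; rewrite mxE mulr_suml.
by apply: eq_bigr => i _; rewrite !mxE mulrAC.
Qed.

Lemma Cuw_centering u w : (1 < t)%N -> pseudo_symmetric Sigma p ->
  Cuw Sigma p u w = ((t.-1)%:R^-1 * qform (Vxi Sigma p) u w) *: centering_mx R t.
Proof.
move=> t_gt1 psym; rewrite -mxtrace_Cuw.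
exact: completely_symmetric_centering (Cuw_completely_symmetric _ _ psym)
  (Cuw_mul_ones _ _).
Qed.

Definition Gcomb s (u : 'cV[R]_3) : 'M[R]_(k, t) := \sum_(i < 3) u i 0 *: Gmat R s i.

Lemma Cuw_Gcomb u w :
  Cuw Sigma p u w = \sum_s p s *: ((Gcomb s u)^T *m Btilde Sigma *m Gcomb s w).
Proof.
have expand s : (Gcomb s u)^T *m Btilde Sigma *m Gcomb s w
    = \sum_(i < 3) \sum_(j < 3) (u i 0 * w j 0) *: Cs Sigma s i j.
  rewrite /Gcomb [_^T]raddf_sum mulmx_suml mulmx_suml; apply: eq_bigr => i _.
  rewrite mulmx_sumr; apply: eq_bigr => j _.
  by rewrite linearZ /= [(_ *: _)^T]linearZ /= -!scalemxAl scalerA mulrC.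
under [RHS]eq_bigr do rewrite expand scaler_sumr; rewrite exchange_big /=.
apply: eq_bigr => i _; under eq_bigr do rewrite scaler_sumr; rewrite exchange_big /=.
apply: eq_bigr => j _; rewrite scaler_sumr; apply: eq_bigr => s _.
by rewrite !scalerA mulrC.
Qed.

Lemma qform_Vxi_ge0 u : (forall s, 0 <= p s) -> 0 <= qform (Vxi Sigma p) u u.
Proof.
move=> p_ge0; rewrite -mxtrace_Cuw Cuw_Gcomb raddf_sum; apply: sumr_ge0 => s _.
rewrite /= mxtraceZ mulr_ge0 // mxtrace_congr_ge0 // => x.
exact: Btilde_bform_ge0.
Qed.

Lemma Ixi1_centering u w x : (1 < t)%N -> pseudo_symmetric Sigma p ->
  (ones R t)^T *m x = 0 ->
  let c := (t.-1)%:R^-1 in let V := Vxi Sigma p in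
  Ixi1 Sigma p u w x = (c * qform V u u) *: centering_mx R t
    - ((c * qform V u w) ^+ 2 / (c * qform V w w * (x^T *m x) 0 0)) *: (x *m x^T).
Proof.
move=> t_gt1 psym x_orth c V; rewrite /Ixi1 /= !Cuw_centering // -/c -/V.
have xT_centering : x^T *m centering_mx R t = x^T.
  by rewrite -trmx_centering -trmx_mul centering_mx_mul_orth.
rewrite -!scalemxAl !centering_mx_mul_orth // -!scalemxAr xT_centering.
rewrite -scalemxAl [(_ *: _ : 'M_1) 0 0]mxE trmxK !linearZ /= -scalemxAl !scalerA.
rewrite !scalerN scalerA pinv1E; congr (_ - _ *: _).
by rewrite -mulrA mulrC -expr2.
Qed.

End Design.

Theorem proposition5 (R : realFieldType) (k t : nat) (hk : (2 <= k)%N) (ht : (2 <= t)%N)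
    (Sigma : 'M[R]_k) (hSigma : pos_def Sigma)
    (p : {ffun seqT k t -> R}) (hp : is_measure p)
    (hps : pseudo_symmetric Sigma p) (lambda : R) :
  let V := Vxi Sigma p in
  let Q2 := qform V (ell2 R) (ell2 R) in
  let q2s := qform V (ellv lambda) (ellv lambda)
             - (qform V (ellv lambda) (ell2 R)) ^+ 2 * pinv1 Q2 in
  (forall tau : 'cV[R]_t, in_calT tau ->
     char_poly (Ctilde Sigma p lambda tau)
     = 'X * ('X - ((t.-1)%:R^-1 * q2s)%:P)
          * ('X - ((t.-1)%:R^-1 * qform V (ellv lambda) (ellv lambda))%:P) ^+ (t - 2)%N)
  /\ q2s <= qform V (ellv lambda) (ellv lambda).
Proof.
move=> V Q2 q2s; have k_gt0 : (0 < k)%N by apply: ltnW.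
split=> [tau [tau_orth /eqP tau_neq0]|]; last first.
  rewrite gerBl mulr_ge0 ?sqr_ge0 // pinv1E invr_ge0.
  exact: qform_Vxi_ge0 (proj1 hp).
rewrite /Ctilde Ixi1_centering // char_poly_centering_sub_rank1 //.
congr (_ * ('X - _%:P) * _); rewrite /q2s pinv1E -/V -/Q2.
set c := (t.-1)%:R^-1; set n := (tau^T *m tau) 0 0.
have c_neq0 : c != 0 by rewrite invr_eq0 pnatr_eq0 -lt0n -ltnS prednK // ltnW.
have n_neq0 : n != 0 by rewrite gt_eqF // trmx_mul_self_gt0.
(* Q2 may vanish: naming its inverse keeps [field] from requiring Q2 != 0. *)
rewrite !invfM; set iQ2 := Q2^-1; field.
by rewrite c_neq0 n_neq0.
Qed.
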